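(* Let $f(x,y)=\left(x+\frac1y,\ y-\frac1y-x\right)$ be the Hénon–Devaney map. For $n\ge1$ let $U_n$ be the set of $t\in\mathbb{R}$ such that $f^{k}(t,-t)$ is defined and does not lie on $\{y=0\}$ for every $k=0,1,\dots,n-1$ (so that $f^{n}(t,-t)$ is defined), and write $f^{n}(t,-t)=(f^n_x(t,-t),f^n_y(t,-t))$. Then for every $n\ge1$: (a) on each connected component of $U_n$, $t\mapsto f^n_x(t,-t)$ is increasing and $t\mapsto f^n_y(t,-t)$ is decreasing; (b) $f^{n-1}(\{y=-x\})\cap f^{n}(\{y=-x\})=\emptyset$, where $f^{k}(\{y=-x\})=\{f^k(t,-t):t\in U_k\}$ for $k\ge1$ and $f^0(\{y=-x\})=\{y=-x\}$. *)

From HB Require Import structures.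
From mathcomp Require Import all_boot all_order all_algebra.
From mathcomp Require Import all_classical all_reals all_analysis.
Set Implicit Arguments. Unset Strict Implicit. Unset Printing Implicit Defensive.
Import Order.TTheory GRing.Theory Num.Theory numFieldNormedType.Exports.
Local Open Scope classical_set_scope.
Local Open Scope ring_scope.

Definition hd_step (R : realType) (p : R * R) : option (R * R) :=
  if p.2 == 0 then None
  else Some (p.1 + p.2^-1, p.2 - p.2^-1 - p.1).

Fixpoint hd_iter (R : realType) (k : nat) (p : R * R) : option (R * R) :=
  match k with
  | 0 => Some p
  | k'.+1 => match hd_iter k' p with
             | Some q => hd_step q
             | None => None
             end
  end.

Definition hd_U (R : realType) (n : nat) : set R :=
  [set t | forall k, (k < n)%N ->
     exists q, hd_iter k (t, - t) = Some q /\ q.2 != 0].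

Definition hd_image (R : realType) (k : nat) : set (R * R) :=
  if k is 0 then [set p | p.2 = - p.1]
  else [set p | exists2 t, hd_U k t & hd_iter k (t, - t) = Some p].

From HB Require Import structures.
From mathcomp Require Import all_boot all_order all_algebra.
From mathcomp Require Import all_classical all_reals all_analysis.
From mathcomp Require Import ring lra.
Import Order.TTheory GRing.Theory Num.Theory numFieldNormedType.Exports.
Local Open Scope classical_set_scope.
Local Open Scope ring_scope.

(* (a) On a connected piece of U_n the second coordinates of the first n
   points of the orbit never vanish, so by the intermediate value theorem each
   has constant sign there; hence y |-> 1/y is decreasing on them, and the
   formulas x' = x + 1/y, y' = y - 1/y - x propagate "x increasing, y
   decreasing" from one iterate to the next.
   (b) f is injective where defined and sends (t,-t) to (t - 1/t, 1/t - 2t),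
   which is off the line L = {y = -x}.  A common point of f^(n-1)(L) and
   f^n(L) would, by injectivity of f^(n-1), be the image of a point of L
   equal to f of a point of L. *)

Section HenonDevaney.
Set Implicit Arguments. Unset Strict Implicit.
Variable R : realType.

Lemma continuous_neq0_mul_gt0 (f : R -> R) s t : s <= t ->
  {within `[s, t], continuous f} -> (forall u, s <= u <= t -> f u != 0) ->
  0 < f s * f t.
Proof.
move=> le_st fc fn0; rewrite ltNge; apply/negP => fst_le0.
have : Num.min (f s) (f t) <= 0 <= Num.max (f s) (f t).
  rewrite ge_min le_max.
  by case: (lerP (f s) 0) => fs0; case: (lerP (f t) 0) => ft0 //=; nra.
case/(IVT le_st fc) => c; rewrite in_itv /= => /fn0.
by move=> /[swap] ->; rewrite eqxx.
Qed.

Lemma connected_component_interval (A : set R) c s t u :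
  connected_component A c s -> connected_component A c t -> s <= u <= t -> A u.
Proof.
move=> cs ct su; apply: (@connected_component_sub _ A c).
have /connected_intervalP comp_itv := @component_connected _ A c.
exact: comp_itv _ _ cs ct _ su.
Qed.

Definition hd_map (p : R * R) : R * R := (p.1 + p.2^-1, p.2 - p.2^-1 - p.1).

Definition hd_orbit (k : nat) (t : R) : R * R := iter k hd_map (t, - t).

Lemma hd_stepE q : q.2 != 0 -> hd_step q = Some (hd_map q).
Proof. by rewrite /hd_step => /negbTE ->. Qed.

Lemma hd_iter_orbit n t k :
  hd_U n t -> (k <= n)%N -> hd_iter k (t, - t) = Some (hd_orbit k t).
Proof.
move=> Ut; elim: k => [//|k IH] ltkn.
have [q [Eq q0]] := Ut k ltkn.
have Ek := IH (ltnW ltkn).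
rewrite Ek in Eq; case: Eq q0 => <- q0.
by rewrite /= Ek hd_stepE.
Qed.

Lemma hd_orbit_neq0 n t k : hd_U n t -> (k < n)%N -> (hd_orbit k t).2 != 0.
Proof.
move=> Ut ltkn; have [q [Eq q0]] := Ut k ltkn.
by rewrite (hd_iter_orbit Ut (ltnW ltkn)) in Eq; case: Eq => ->.
Qed.

Lemma continuous_hd_orbit k t :
  (forall j, (j < k)%N -> (hd_orbit j t).2 != 0) ->
  {for t, continuous (fun u => (hd_orbit k u).1)} /\
  {for t, continuous (fun u => (hd_orbit k u).2)}.
Proof.
elim: k => [|k IH] nz.
  by split; [exact: cvg_id | exact: (continuousN cvg_id)].
have [c1 c2] := IH (fun j ltjk => nz j (ltnW ltjk)).
have cV := @continuousV _ _ (fun u => (hd_orbit k u).2) t (nz k (ltnSn k)) c2.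
by split; [exact: continuousD c1 cV | exact: continuousB (continuousB c2 cV) c1].
Qed.

Lemma hd_map_monotone a b : a.1 < b.1 -> b.2 < a.2 -> 0 < a.2 * b.2 ->
  (hd_map a).1 < (hd_map b).1 /\ (hd_map b).2 < (hd_map a).2.
Proof.
case: a b => [x1 y1] [x2 y2] /= lt_x lt_y y12_gt0.
have /andP[y1_neq0 y2_neq0] : (y1 != 0) && (y2 != 0).
  by rewrite -negb_or -mulf_eq0 gt_eqF.
have ltV : y1^-1 < y2^-1.
  have -> : y2^-1 = y1^-1 + (y1 - y2) / (y1 * y2).
    by field; rewrite y1_neq0 y2_neq0.
  by rewrite ltrDl divr_gt0 // subr_gt0.
rewrite /hd_map /=; lra.
Qed.

Section OnAnInterval.
Variables (n : nat) (s t : R).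
Hypothesis U_st : forall u, s <= u <= t -> hd_U n u.

Lemma hd_orbit_mul_gt0 k : s <= t -> (k < n)%N ->
  0 < (hd_orbit k s).2 * (hd_orbit k t).2.
Proof.
move=> le_st ltkn.
apply: (@continuous_neq0_mul_gt0 (fun u => (hd_orbit k u).2)) => // [|u /U_st Uu].
  apply: continuous_in_subspaceT => u; rewrite inE /= in_itv /= => /U_st Uu.
  apply: (continuous_hd_orbit _).2 => j ltjk.
  exact: hd_orbit_neq0 Uu (ltn_trans ltjk ltkn).
exact: hd_orbit_neq0 Uu ltkn.
Qed.

Lemma hd_orbit_monotone k : s < t -> (k <= n)%N ->
  (hd_orbit k s).1 < (hd_orbit k t).1 /\ (hd_orbit k t).2 < (hd_orbit k s).2.
Proof.
move=> lt_st; elim: k => [|k IH] ltkn; first by rewrite /= ltrN2.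
have [lt1 lt2] := IH (ltnW ltkn).
exact: hd_map_monotone lt1 lt2 (hd_orbit_mul_gt0 (ltW lt_st) ltkn).
Qed.

End OnAnInterval.

Lemma hd_step_inj (a b p : R * R) :
  hd_step a = Some p -> hd_step b = Some p -> a = b.
Proof.
rewrite /hd_step; case: eqP => // _ [<-]; case: eqP => // _ [E1 E2].
have e2 : a.2 = b.2 by lra.
have e1 : a.1 = b.1 by rewrite e2 in E1; lra.
by case: a b e1 e2 {E1 E2} => [a1 a2] [b1 b2] /= -> ->.
Qed.

Lemma hd_iter_inj k (a b p : R * R) :
  hd_iter k a = Some p -> hd_iter k b = Some p -> a = b.
Proof.
elim: k p => [|k IH] p /=; first by move=> [->] [->].
case Ea: (hd_iter k a) => [qa|] //; case Eb: (hd_iter k b) => [qb|] // Ha Hb.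
by apply: IH Ea _; rewrite (hd_step_inj Ha Hb).
Qed.

Lemma hd_iterSr k (a : R * R) : hd_iter k.+1 a = obind (hd_iter k) (hd_step a).
Proof.
elim: k => [|k IH]; first by rewrite -[LHS]/(hd_step a); case: (hd_step a).
by rewrite -[LHS]/(obind (@hd_step R) (hd_iter k.+1 a)) IH; case: (hd_step a).
Qed.

Lemma hd_step_antidiag (t : R) p : hd_step (t, - t) = Some p -> p.2 != - p.1.
Proof.
rewrite /hd_step /=; case: eqP => // /eqP t0 [<-] /=.
by apply: contra t0 => /eqP ?; rewrite oppr_eq0; apply/eqP; lra.
Qed.

Lemma hd_image_antidiag k (p : R * R) :
  hd_image k p -> exists2 a : R * R, a.2 = - a.1 & hd_iter k a = Some p.
Proof. by case: k => [|k] /=; [exists p | case=> t _; exists (t, - t)]. Qed.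

End HenonDevaney.

Theorem mainTheorem5 (R : realType) (n : nat) (hn : (1 <= n)%N) :
  (forall (c s t : R) (ps pt : R * R),
      @hd_U R n c ->
      connected_component ((@hd_U R n)) c s ->
      connected_component ((@hd_U R n)) c t ->
      s < t ->
      hd_iter n (s, - s) = Some ps ->
      hd_iter n (t, - t) = Some pt ->
      ps.1 < pt.1 /\ pt.2 < ps.2)
  /\ @hd_image R n.-1 `&` @hd_image R n = set0.
Proof.
split.
  move=> c s t ps pt _ cs ct lt_st.
  have U_st u : s <= u <= t -> hd_U n u := connected_component_interval cs ct.
  have [Us Ut] : hd_U n s /\ hd_U n t by split; apply: U_st; rewrite lexx ltW.
  rewrite (hd_iter_orbit Us (leqnn n)) (hd_iter_orbit Ut (leqnn n)) => -[<-] [<-].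
  exact: (hd_orbit_monotone U_st lt_st (leqnn n)).
case: n hn => // m _; rewrite -subset0 => p [/hd_image_antidiag[a a_line Ea]].
case=> t _; rewrite hd_iterSr; case Eb: hd_step => [b|] //= Eb'.
by move: (hd_step_antidiag Eb); rewrite -(hd_iter_inj Ea Eb') a_line eqxx.
Qed.
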